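(* Let $M$ be a complete pointed metric space. If $(m_{x_ny_n})_n$ is a sequence of molecules in $\mathcal F(M)$ which converges weakly to some $\mu\in\mathcal F(M)$, then there exist $x\neq y$ in $M$ such that $\mu=m_{xy}$, and $(m_{x_ny_n})$ converges in norm to $m_{xy}$.
   Context: A pointed metric space $M$ has a distinguished origin $0$. $\mathrm{Lip}_0(M)$ is the Banach space of real Lipschitz functions on $M$ vanishing at $0$ with the best Lipschitz constant as norm; $\delta(x)\in\mathrm{Lip}_0(M)^*$ is evaluation at $x$, and the Lipschitz free space $\mathcal F(M)$ is the closed linear span of $\delta(M)$ in $\mathrm{Lip}_0(M)^*$, with $\mathcal F(M)^*=\mathrm{Lip}_0(M)$. The molecule is $m_{xy}=(\delta(x)-\delta(y))/d(x,y)$ for $x\neq y$. *)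

From Stdlib Require Import Reals Lra List.
Open Scope R_scope.
Set Implicit Arguments.

Section LipFree.
Variables (T : Type) (d : T -> T -> R).

Definition is_metric : Prop :=
  (forall x y, 0 <= d x y) /\
  (forall x y, d x y = 0 <-> x = y) /\
  (forall x y, d x y = d y x) /\
  (forall x y z, d x z <= d x y + d y z).

Definition complete_metric : Prop :=
  forall u : nat -> T,
    (forall eps, 0 < eps -> exists N, forall m n, (N <= m)%nat -> (N <= n)%nat ->
        d (u m) (u n) < eps) ->
    exists l, forall eps, 0 < eps -> exists N, forall n, (N <= n)%nat -> d (u n) l < eps.

Variable o : T.

Definition lipschitz_with (L : R) (f : T -> R) : Prop :=
  forall x y, Rabs (f x - f y) <= L * d x y.

Definition Lip0 (f : T -> R) : Prop := f o = 0 /\ exists L, lipschitz_with L f.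

Definition Lip0_ball (f : T -> R) : Prop := f o = 0 /\ lipschitz_with 1 f.

(** Functionals on Lip_0(M), represented as maps (T -> R) -> R; only their
    values on Lip_0(M) matter. *)
Definition functional := (T -> R) -> R.

Definition dual_norm_le (mu : functional) (c : R) : Prop :=
  forall f, Lip0_ball f -> Rabs (mu f) <= c.

Definition fsub (mu nu : functional) : functional := fun f => mu f - nu f.

Definition delta (x : T) : functional := fun f => f x.

Definition comb (l : list (R * T)) : functional :=
  fun f => fold_right (fun p s => fst p * f (snd p) + s) 0 l.

Definition in_dual (mu : functional) : Prop :=
  (forall f g a b, Lip0 f -> Lip0 g ->
     mu (fun t => a * f t + b * g t) = a * mu f + b * mu g) /\
  (exists C, dual_norm_le mu C).

(** mu belongs to the Lipschitz free space F(M): the norm closure of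
    span delta(M) in Lip_0(M)^* *)
Definition in_free (mu : functional) : Prop :=
  in_dual mu /\
  forall eps, 0 < eps -> exists l, dual_norm_le (fsub mu (comb l)) eps.

Definition feq (mu nu : functional) : Prop := forall f, Lip0 f -> mu f = nu f.

Definition molecule (x y : T) : functional := fun f => (f x - f y) / d x y.

Definition in_free_dual (phi : functional -> R) : Prop :=
  (forall mu nu a b, in_free mu -> in_free nu ->
     phi (fun f => a * mu f + b * nu f) = a * phi mu + b * phi nu) /\
  (exists C, forall mu c, in_free mu -> dual_norm_le mu c -> Rabs (phi mu) <= C * c).

Definition weak_cv (s : nat -> functional) (mu : functional) : Prop :=
  forall phi, in_free_dual phi -> Un_cv (fun n => phi (s n)) (phi mu).

Definition norm_cv (s : nat -> functional) (mu : functional) : Prop :=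
  forall eps, 0 < eps -> exists N, forall n, (N <= n)%nat ->
    dual_norm_le (fsub (s n) mu) eps.

End LipFree.

From Stdlib Require Import Reals Lra Lia Classical ClassicalEpsilon.
Open Scope R_scope.

(* Testing against 1-Lipschitz functions, the values m_{x_n y_n}(f) converge
   for every f in the unit ball of Lip_0(M). If, along some subsequence, each
   x_{n_k} were far (relative to d(x_{n_k}, y_{n_k})) from all the other
   points of the subsequence, the distance to
   {y_{n_0}, x_{n_1}, y_{n_2}, x_{n_3}, ...} would take values >= c on the
   even molecules and <= 0 on the odd ones, contradicting convergence.
   Such a subsequence can be extracted if d(x_n, y_n) tends to infinity, if
   (x_n) or (y_n) has no Cauchy subsequence, or if x_n and y_n converge to the
   same point. Hence, by completeness, every subsequence has a further
   subsequence along which x_n -> x and y_n -> y with x <> y. The weak limit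
   is then m_{xy}, and m_{xy} determines x and y, so the whole sequences
   converge to x and y; finally
   |m_{x_n y_n}(f) - m_{xy}(f)| d(x,y) <= 2 (d(x_n,x) + d(y_n,y)) for
   1-Lipschitz f gives norm convergence. *)

Definition infinite (A : nat -> Prop) : Prop :=
  forall N, exists n, (N <= n)%nat /\ A n.

Definition eventually_in (A Q : nat -> Prop) : Prop :=
  exists N, forall n, (N <= n)%nat -> A n -> Q n.

Definition strictly_increasing (phi : nat -> nat) : Prop :=
  forall k, (phi k < phi (S k))%nat.

Definition range (phi : nat -> nat) (n : nat) : Prop := exists k, n = phi k.

Lemma eventually_in_and A P Q :
  eventually_in A P -> eventually_in A Q -> eventually_in A (fun n => P n /\ Q n).
Proof.
  intros [N1 H1] [N2 H2]; exists (Nat.max N1 N2); intros n hn An.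
  split; [apply H1 | apply H2]; auto; lia.
Qed.

Lemma eventually_in_impl A P Q :
  eventually_in A P -> (forall n, A n -> P n -> Q n) -> eventually_in A Q.
Proof. intros [N H] HPQ; exists N; auto. Qed.

Lemma eventually_in_subset A A' Q :
  (forall n, A' n -> A n) -> eventually_in A Q -> eventually_in A' Q.
Proof. intros hsub [N H]; exists N; auto. Qed.

Lemma infinite_mono A A' : (forall n, A n -> A' n) -> infinite A -> infinite A'.
Proof. intros hsub HA N; destruct (HA N) as (n & hn & An); exists n; auto. Qed.

Lemma infinite_eventually A Q :
  infinite A -> eventually_in A Q -> infinite (fun n => A n /\ Q n).
Proof.
  intros HA [N HN] M; destruct (HA (Nat.max M N)) as (n & hn & An).
  exists n; split; [lia | split; [exact An | apply HN; [lia | exact An]]].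
Qed.

Lemma eventually_in_of_not_infinite A Q :
  ~ infinite (fun n => A n /\ ~ Q n) -> eventually_in A Q.
Proof.
  intro h; apply not_all_ex_not in h as [N h].
  exists N; intros n hn An; apply NNPP; intro hQ; apply h; now exists n.
Qed.

Lemma infinite_or A P Q :
  infinite A -> (forall n, A n -> P n \/ Q n) ->
  infinite (fun n => A n /\ P n) \/ infinite (fun n => A n /\ Q n).
Proof.
  intros HA HPQ; destruct (classic (infinite (fun n => A n /\ P n))) as [h | h];
    [now left | right].
  apply infinite_eventually; [exact HA |].
  apply eventually_in_of_not_infinite; intro hQ; apply h.
  apply infinite_mono with (2 := hQ); intros n [An hn].
  destruct (HPQ n An); tauto.
Qed.

Lemma strictly_increasing_ge phi : strictly_increasing phi -> forall k, (k <= phi k)%nat.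
Proof. intros H k; induction k as [|k IH]; [lia | specialize (H k); lia]. Qed.

Lemma strictly_increasing_lt phi :
  strictly_increasing phi -> forall j k, (j < k)%nat -> (phi j < phi k)%nat.
Proof. intros H j k hjk; induction hjk as [|k hjk IH]; [apply H | specialize (H k); lia]. Qed.

Lemma infinite_range phi : strictly_increasing phi -> infinite (range phi).
Proof. intros H N; exists (phi N); split; [apply strictly_increasing_ge, H | now exists N]. Qed.

Lemma increasing_chain A (P : nat -> nat -> Prop) :
  infinite A -> (forall j, A j -> eventually_in A (P j)) ->
  exists phi, strictly_increasing phi /\ forall j k, (j < k)%nat -> P (phi j) (phi k).
Proof.
  intros HA HP.
  destruct (choice (fun N m => (N <= m)%nat /\ A m) HA) as [pick Hpick].
  destruct (choice (fun j N => A j -> forall m, (N <= m)%nat -> A m -> P j m))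
    as [threshold Hthreshold_spec].
  { intro j; destruct (classic (A j)) as [Aj | nAj].
    - destruct (HP j Aj) as [N HN]; now exists N.
    - now exists O. }
  (* The state is the last chosen index together with a threshold beyond which
     every index is P-related to all the indices chosen so far. *)
  pose (step := fun s : nat * nat =>
    let m := pick (Nat.max (S (fst s)) (snd s)) in (m, Nat.max (snd s) (threshold m))).
  pose (state := fun k => Nat.iter k step (pick O, threshold (pick O))).
  pose (phi := fun k => fst (state k)).
  assert (Hnext : forall k, phi (S k) = pick (Nat.max (S (phi k)) (snd (state k))))
    by reflexivity.
  assert (HAphi : forall k, A (phi k)).
  { intros [|k]; [apply (Hpick O) | rewrite Hnext; apply Hpick]. }
  assert (Hstate : forall k j, (j <= k)%nat ->
                     (threshold (phi j) <= snd (state k))%nat).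
  { induction k as [|k IH]; intros j hj.
    - replace j with O by lia; apply Nat.le_refl.
    - change (snd (state (S k))) with (Nat.max (snd (state k)) (threshold (phi (S k)))).
      destruct (Nat.eq_dec j (S k)) as [-> | hne]; [lia |].
      specialize (IH j ltac:(lia)); lia. }
  exists phi; split.
  - intro k; rewrite Hnext; destruct (Hpick (Nat.max (S (phi k)) (snd (state k)))); lia.
  - intros j [|k] hjk; [lia |].
    apply (Hthreshold_spec (phi j) (HAphi j)); [| apply HAphi].
    rewrite Hnext; destruct (Hpick (Nat.max (S (phi k)) (snd (state k)))).
    specialize (Hstate k j ltac:(lia)); lia.
Qed.

Lemma diagonal_chain (As : nat -> nat -> Prop) :
  (forall k, infinite (As k)) -> exists phi, strictly_increasing phi /\ forall k, As k (phi k).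
Proof.
  intro HAs.
  destruct (choice (fun kN m => (snd kN <= m)%nat /\ As (fst kN) m)) as [pick Hpick].
  { intros [k N]; apply HAs. }
  pose (phi := fix phi k := match k with O => pick (O, O) | S k => pick (S k, S (phi k)) end).
  exists phi; split.
  - intro k; exact (proj1 (Hpick (S k, S (phi k)))).
  - intros [|k]; [exact (proj2 (Hpick (O, O))) | exact (proj2 (Hpick (S k, S (phi k))))].
Qed.

Section Molecules.

Variables (T : Type) (d : T -> T -> R) (o : T).
Hypothesis Hd : is_metric d.

Lemma dist_ge0 x y : 0 <= d x y.
Proof. exact (proj1 Hd x y). Qed.

Lemma dist_eq0 x y : d x y = 0 <-> x = y.
Proof. exact (proj1 (proj2 Hd) x y). Qed.

Lemma dist_sym x y : d x y = d y x.
Proof. exact (proj1 (proj2 (proj2 Hd)) x y). Qed.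

Lemma dist_triangle x y z : d x z <= d x y + d y z.
Proof. exact (proj2 (proj2 (proj2 Hd)) x y z). Qed.

Lemma dist_gt0 x y : x <> y -> 0 < d x y.
Proof.
  intro hxy; destruct (dist_ge0 x y) as [h | h]; [exact h |].
  now destruct hxy; apply dist_eq0.
Qed.

Lemma far_endpoint u v z : d u v / 2 <= d u z \/ d v u / 2 <= d v z.
Proof.
  pose proof (dist_triangle u z v); pose proof (dist_sym z v); pose proof (dist_sym u v).
  destruct (Rle_or_lt (d u v / 2) (d u z)); [left | right]; lra.
Qed.

Definition cv_along (A : nat -> Prop) (p : nat -> T) (x : T) : Prop :=
  forall eps, 0 < eps -> eventually_in A (fun n => d (p n) x < eps).

Definition separated_along (A : nat -> Prop) (p : nat -> T) (eps : R) : Prop :=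
  forall j, A j -> eventually_in A (fun m => eps <= d (p m) (p j)).

Definition to_infinity (A : nat -> Prop) (u : nat -> R) : Prop :=
  forall M, eventually_in A (fun n => M <= u n).

Lemma cv_along_subset A A' p x :
  (forall n, A' n -> A n) -> cv_along A p x -> cv_along A' p x.
Proof. intros hsub h eps heps; exact (eventually_in_subset _ _ _ hsub (h eps heps)). Qed.

Lemma cv_along_range p phi x :
  strictly_increasing phi ->
  (forall eps, 0 < eps -> exists N, forall n, (N <= n)%nat -> d (p (phi n)) x < eps) ->
  cv_along (range phi) p x.
Proof.
  intros Hphi Hx eps heps; destruct (Hx eps heps) as [N HN].
  exists (phi N); intros n hn [k ->]; apply HN.
  destruct (Nat.le_gt_cases N k) as [h | h]; [exact h |].
  pose proof (strictly_increasing_lt phi Hphi k N h); lia.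
Qed.

Lemma cv_of_cv_subsets p x :
  (forall A, infinite A ->
     exists A', (forall n, A' n -> A n) /\ infinite A' /\ cv_along A' p x) ->
  cv_along (fun _ => True) p x.
Proof.
  intros H eps heps; apply eventually_in_of_not_infinite; intro hfar.
  destruct (H _ hfar) as (A' & hsub & HA' & Hcv).
  destruct (infinite_eventually _ _ HA' (Hcv eps heps) O) as (n & _ & An & hn).
  exact (proj2 (hsub n An) hn).
Qed.

Lemma to_infinity_of_unbounded A u :
  ~ (exists K, infinite (fun n => A n /\ u n <= K)) -> to_infinity A u.
Proof.
  intros h M; apply eventually_in_of_not_infinite; intro hinf; apply h; exists M.
  apply infinite_mono with (2 := hinf); intros n [An hn]; split; [exact An | lra].
Qed.

Definition neg_dists (e : nat -> T) (t : T) (r : R) : Prop := exists i, r = - d t (e i).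

Lemma neg_dists_bound e t : bound (neg_dists e t).
Proof. exists 0; intros r [i ->]; pose proof (dist_ge0 t (e i)); lra. Qed.

Lemma neg_dists_inhabited e t : exists r, neg_dists e t r.
Proof. now exists (- d t (e O)), O. Qed.

Definition dist_seq (e : nat -> T) (t : T) : R :=
  - proj1_sig (completeness _ (neg_dists_bound e t) (neg_dists_inhabited e t)).

Lemma dist_seq_spec e t :
  (forall i, dist_seq e t <= d t (e i)) /\
  (forall c, (forall i, c <= d t (e i)) -> c <= dist_seq e t).
Proof.
  unfold dist_seq; destruct (completeness _ _ _) as [m [Hub Hlub]]; simpl; split.
  - intro i; enough (- d t (e i) <= m) by lra; apply Hub; now exists i.
  - intros c Hc; enough (m <= - c) by lra.
    apply Hlub; intros r [i ->]; specialize (Hc i); lra.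
Qed.

Lemma dist_seq_le e t i : dist_seq e t <= d t (e i).
Proof. apply dist_seq_spec. Qed.

Lemma dist_seq_glb e t c : (forall i, c <= d t (e i)) -> c <= dist_seq e t.
Proof. apply dist_seq_spec. Qed.

Lemma dist_seq_ge0 e t : 0 <= dist_seq e t.
Proof. apply dist_seq_glb; intro; apply dist_ge0. Qed.

Lemma dist_seq_at e i : dist_seq e (e i) = 0.
Proof.
  pose proof (dist_seq_le e (e i) i); pose proof (dist_seq_ge0 e (e i)).
  rewrite (proj2 (dist_eq0 _ _) eq_refl) in *; lra.
Qed.

Lemma dist_seq_ball e : Lip0_ball d o (fun t => dist_seq e t - dist_seq e o).
Proof.
  assert (Hlip : forall s t, dist_seq e s <= d s t + dist_seq e t).
  { intros s t; enough (dist_seq e s - d s t <= dist_seq e t) by lra.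
    apply dist_seq_glb; intro i.
    pose proof (dist_seq_le e s i); pose proof (dist_triangle s t (e i)); lra. }
  split; [ring |]; intros s t.
  pose proof (Hlip s t); pose proof (Hlip t s); rewrite (dist_sym t s) in *.
  apply Rabs_le; lra.
Qed.

Lemma molecule_mul f x y : x <> y -> molecule d x y f * d x y = f x - f y.
Proof. intro hxy; pose proof (dist_gt0 x y hxy); unfold molecule; field; lra. Qed.

Lemma molecule_ge f x y c : x <> y -> c * d x y <= f x - f y -> c <= molecule d x y f.
Proof.
  intros hxy h; pose proof (dist_gt0 x y hxy).
  apply Rmult_le_reg_r with (d x y); [lra | now rewrite molecule_mul].
Qed.

Lemma molecule_le f x y c : x <> y -> f x - f y <= c * d x y -> molecule d x y f <= c.
Proof.
  intros hxy h; pose proof (dist_gt0 x y hxy).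
  apply Rmult_le_reg_r with (d x y); [lra | now rewrite molecule_mul].
Qed.

Lemma molecule_shift g k x y : molecule d x y (fun t => g t - k) = molecule d x y g.
Proof. unfold molecule; f_equal; ring. Qed.

Lemma molecule_swap f x y : molecule d y x f = - molecule d x y f.
Proof. unfold molecule; rewrite (dist_sym y x); unfold Rdiv; ring. Qed.

Lemma molecule_abs_le f u v : lipschitz_with d 1 f -> u <> v -> Rabs (molecule d u v f) <= 1.
Proof.
  intros Hf huv; pose proof (dist_gt0 u v huv).
  apply Rmult_le_reg_r with (d u v); [lra |].
  rewrite Rmult_1_l, <- (Rabs_pos_eq (d u v)) at 1 by lra.
  rewrite <- Rabs_mult, molecule_mul by exact huv.
  pose proof (Hf u v); lra.
Qed.

Lemma molecule_sub_le f x y u v :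
  lipschitz_with d 1 f -> x <> y -> u <> v ->
  Rabs (molecule d u v f - molecule d x y f) * d x y <= 2 * (d u x + d v y).
Proof.
  intros Hf hxy huv.
  set (r := molecule d u v f).
  assert (Hr : Rabs r <= 1) by (apply molecule_abs_le; assumption).
  assert (Hlen : Rabs (d x y - d u v) <= d u x + d v y).
  { pose proof (dist_triangle x u y); pose proof (dist_triangle u v y);
    pose proof (dist_triangle u x v); pose proof (dist_triangle x y v);
    pose proof (dist_sym x u); pose proof (dist_sym y v).
    apply Rabs_le; lra. }
  rewrite <- (Rabs_pos_eq (d x y)) by apply dist_ge0; rewrite <- Rabs_mult.
  replace ((r - molecule d x y f) * d x y)
    with (r * (d x y - d u v) + (f u - f x) + - (f v - f y)).
  2:{ pose proof (molecule_mul f u v huv) as Euv; pose proof (molecule_mul f x y hxy).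
      fold r in Euv; lra. }
  eapply Rle_trans; [apply Rabs_triang |]; rewrite Rabs_Ropp.
  eapply Rle_trans; [apply Rplus_le_compat_r, Rabs_triang |].
  rewrite Rabs_mult.
  pose proof (Hf u x); pose proof (Hf v y); pose proof (Rabs_pos (d x y - d u v)).
  assert (Rabs r * Rabs (d x y - d u v) <= Rabs (d x y - d u v)).
  { rewrite <- (Rmult_1_l (Rabs (d x y - d u v))) at 2.
    apply Rmult_le_compat_r; assumption. }
  lra.
Qed.

Lemma molecules_close_eventually a b A x y :
  (forall n, a n <> b n) -> x <> y -> cv_along A a x -> cv_along A b y ->
  forall eps, 0 < eps -> eventually_in A (fun n => forall f, lipschitz_with d 1 f ->
    Rabs (molecule d (a n) (b n) f - molecule d x y f) < eps).
Proof.
  intros Hab hxy Ha Hb eps heps; pose proof (dist_gt0 x y hxy).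
  assert (hdelta : 0 < eps * d x y / 4) by (apply Rdiv_lt_0_compat; [nra | lra]).
  apply eventually_in_impl with (1 := eventually_in_and _ _ _ (Ha _ hdelta) (Hb _ hdelta)).
  intros n _ [hx hy] f Hf.
  apply Rmult_lt_reg_r with (d x y); [lra |].
  pose proof (molecule_sub_le f x y (a n) (b n) Hf hxy (Hab n)); lra.
Qed.

Definition weakly_cauchy (a b : nat -> T) : Prop :=
  forall f, Lip0_ball d o f -> exists L, Un_cv (fun n => molecule d (a n) (b n) f) L.

Lemma weakly_cauchy_swap a b : weakly_cauchy a b -> weakly_cauchy b a.
Proof.
  intros Hw f Hf; destruct (Hw f Hf) as [L HL]; exists (- L).
  intros eps heps; destruct (CV_opp _ _ HL eps heps) as [N HN].
  exists N; intros n hn; rewrite molecule_swap; exact (HN n hn).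
Qed.

Definition far_from (a b : nat -> T) (c : R) (m j : nat) : Prop :=
  c * d (a m) (b m) <= d (a m) (a j) /\ c * d (a m) (b m) <= d (a m) (b j).

Lemma weakly_cauchy_no_far_chain a b c phi :
  (forall n, a n <> b n) -> weakly_cauchy a b -> 0 < c <= 1 -> strictly_increasing phi ->
  (forall j k, j <> k -> far_from a b c (phi k) (phi j)) -> False.
Proof.
  intros Hab Hw Hc Hphi Hfar.
  set (e := fun i => if Nat.even i then b (phi i) else a (phi i)).
  set (f := fun t => dist_seq e t - dist_seq e o).
  destruct (Hw f (dist_seq_ball e)) as [L HL].
  destruct (HL (c / 2)) as [N HN]; [lra |].
  pose proof (strictly_increasing_ge phi Hphi (2 * N)).
  pose proof (strictly_increasing_ge phi Hphi (2 * N + 1)).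
  set (n1 := phi (2 * N)%nat) in *; set (n2 := phi (2 * N + 1)%nat) in *.
  assert (He1 : e (2 * N)%nat = b n1) by (unfold e; now rewrite Nat.even_even).
  assert (He2 : e (2 * N + 1)%nat = a n2) by (unfold e; now rewrite Nat.even_odd).
  assert (Hfar1 : c * d (a n1) (b n1) <= dist_seq e (a n1)).
  { apply dist_seq_glb; intro i; destruct (Nat.eq_dec i (2 * N)) as [-> | hi].
    - rewrite He1; pose proof (dist_ge0 (a n1) (b n1)); nra.
    - destruct (Hfar i (2 * N)%nat hi) as [h1 h2].
      unfold e; destruct (Nat.even i); assumption. }
  assert (Hhigh : c <= molecule d (a n1) (b n1) f).
  { unfold f; rewrite molecule_shift; apply molecule_ge; [apply Hab |].
    rewrite <- He1 at 2; rewrite dist_seq_at; lra. }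
  assert (Hlow : molecule d (a n2) (b n2) f <= 0).
  { unfold f; rewrite molecule_shift; apply molecule_le; [apply Hab |].
    rewrite <- He2, dist_seq_at; pose proof (dist_seq_ge0 e (b n2)); lra. }
  pose proof (HN n1 ltac:(lia)) as H1; pose proof (HN n2 ltac:(lia)) as H2.
  unfold R_dist in H1, H2; apply Rabs_def2 in H1, H2; lra.
Qed.

Lemma weakly_cauchy_no_far_subset a b c A :
  (forall n, a n <> b n) -> weakly_cauchy a b -> 0 < c <= 1 -> infinite A ->
  (forall j, A j -> eventually_in A (fun m => far_from a b c m j /\ far_from a b c j m)) ->
  False.
Proof.
  intros Hab Hw Hc HA Hfar.
  destruct (increasing_chain A _ HA Hfar) as (phi & Hphi & Hchain).
  apply (weakly_cauchy_no_far_chain a b c phi Hab Hw Hc Hphi).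
  intros j k hjk; destruct (proj1 (Nat.lt_gt_cases j k) hjk) as [hlt | hgt].
  - exact (proj1 (Hchain j k hlt)).
  - exact (proj2 (Hchain k j hgt)).
Qed.

Lemma far_endpoint_not_same_limit a b A x :
  (forall n, a n <> b n) -> weakly_cauchy a b ->
  infinite (fun n => A n /\ d (a n) (b n) / 2 <= d (a n) x) ->
  cv_along A a x -> cv_along A b x -> False.
Proof.
  intros Hab Hw HU Ha Hb.
  set (U := fun n => A n /\ d (a n) (b n) / 2 <= d (a n) x) in HU.
  apply (weakly_cauchy_no_far_subset a b (1 / 4) U Hab Hw ltac:(lra) HU).
  intros j [Aj Hj]; pose proof (dist_gt0 _ _ (Hab j)).
  assert (Heps : exists eps, 0 < eps /\ eps <= d (a j) (b j) / 4 /\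
                   (d (b j) x = 0 \/ eps <= d (b j) x / 2)).
  { destruct (dist_ge0 (b j) x) as [hpos | hzero].
    - exists (Rmin (d (a j) (b j) / 4) (d (b j) x / 2)); repeat split.
      + apply Rmin_glb_lt; lra.
      + apply Rmin_l.
      + right; apply Rmin_r.
    - exists (d (a j) (b j) / 4); repeat split; [lra | lra | now left]. }
  destruct Heps as (eps & heps & heps_j & heps_b).
  assert (Hev : eventually_in U (fun m => d (a m) x < eps /\ d (b m) x < eps)).
  { apply eventually_in_subset with A; [now intros n [] |].
    now apply eventually_in_and; [apply Ha | apply Hb]. }
  apply eventually_in_impl with (1 := Hev); intros m [_ Hm] [ham hbm].
  pose proof (dist_triangle (a j) (a m) x); pose proof (dist_triangle (a m) (b j) x);
  pose proof (dist_triangle (b j) (a m) x); pose proof (dist_triangle (a j) (b m) x);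
  pose proof (dist_sym (a j) (a m)); pose proof (dist_sym (b j) (a m));
  pose proof (dist_ge0 (a m) (b m)).
  unfold far_from; repeat split; destruct heps_b; lra.
Qed.

Lemma weakly_cauchy_not_same_limit a b A x :
  (forall n, a n <> b n) -> weakly_cauchy a b -> infinite A ->
  cv_along A a x -> cv_along A b x -> False.
Proof.
  intros Hab Hw HA Ha Hb.
  destruct (infinite_or A _ _ HA (fun n _ => far_endpoint (a n) (b n) x)) as [h | h].
  - exact (far_endpoint_not_same_limit a b A x Hab Hw h Ha Hb).
  - exact (far_endpoint_not_same_limit b a A x (fun n e => Hab n (eq_sym e))
             (weakly_cauchy_swap a b Hw) h Hb Ha).
Qed.

Lemma far_endpoint_not_dist_to_inf a b A :
  (forall n, a n <> b n) -> weakly_cauchy a b -> infinite A ->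
  (forall n, A n -> d (a n) (b n) / 2 <= d (a n) o) ->
  to_infinity A (fun n => d (a n) (b n)) ->
  (forall j, A j -> eventually_in A (fun m => d (a j) (b j) / 4 <= d (a j) (b m))) ->
  False.
Proof.
  intros Hab Hw HA Hfar Hinf Hb.
  apply (weakly_cauchy_no_far_subset a b (1 / 4) A Hab Hw ltac:(lra) HA).
  intros j Aj.
  apply eventually_in_impl
    with (1 := eventually_in_and _ _ _ (Hinf (4 * (d (a j) o + d (b j) o + d (a j) (b j))))
                 (Hb j Aj)).
  intros m Am [HM Hbm]; pose proof (Hfar m Am).
  pose proof (dist_triangle (a m) (a j) o); pose proof (dist_triangle (a m) (b j) o);
  pose proof (dist_sym (a j) (a m));
  pose proof (dist_ge0 (a j) o); pose proof (dist_ge0 (b j) o); pose proof (dist_ge0 (a j) (b j)).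
  unfold far_from; repeat split; lra.
Qed.

Lemma bounded_endpoint_not_dist_to_inf a b A C :
  (forall n, a n <> b n) -> weakly_cauchy a b ->
  to_infinity A (fun n => d (a n) (b n)) -> infinite (fun n => A n /\ d (b n) o <= C) ->
  False.
Proof.
  intros Hab Hw Hinf HC.
  assert (C0 : 0 <= C)
    by (destruct (HC O) as (n & _ & _ & hn); pose proof (dist_ge0 (b n) o); lra).
  set (U := fun n => (A n /\ d (b n) o <= C) /\ 2 * C <= d (a n) o).
  assert (HU : infinite U).
  { apply infinite_eventually; [exact HC |].
    apply eventually_in_impl
      with (1 := eventually_in_subset A _ _ (fun n h => proj1 h) (Hinf (3 * C))).
    intros n [_ hbn] hn; pose proof (dist_triangle (a n) o (b n));
      pose proof (dist_sym o (b n)); lra. }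
  apply (far_endpoint_not_dist_to_inf a b U Hab Hw HU).
  - intros n [[_ hb] ha]; pose proof (dist_triangle (a n) o (b n));
      pose proof (dist_sym o (b n)); lra.
  - intro M; apply eventually_in_subset with A; [now intros n [[] _] | apply Hinf].
  - intros j [[_ hbj] haj]; exists O; intros m _ [[_ hbm] _].
    pose proof (dist_triangle (a j) (b m) o); pose proof (dist_triangle (a j) o (b j));
      pose proof (dist_sym o (b j)); lra.
Qed.

Lemma unbounded_endpoints_not_dist_to_inf a b A :
  (forall n, a n <> b n) -> weakly_cauchy a b ->
  to_infinity A (fun n => d (a n) (b n)) -> to_infinity A (fun n => d (b n) o) ->
  infinite (fun n => A n /\ d (a n) (b n) / 2 <= d (a n) o) -> False.
Proof.
  intros Hab Hw Hinf Hbinf HU.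
  apply (far_endpoint_not_dist_to_inf a b _ Hab Hw HU).
  - now intros n [_ h].
  - intro M; apply eventually_in_subset with A; [now intros n [] | apply Hinf].
  - intros j _; apply eventually_in_subset with A; [now intros n [] |].
    apply eventually_in_impl with (1 := Hbinf (d (a j) o + d (a j) (b j))).
    intros m _ hm; pose proof (dist_triangle (b m) (a j) o);
      pose proof (dist_sym (b m) (a j)); pose proof (dist_ge0 (a j) (b j)); lra.
Qed.

Lemma weakly_cauchy_dist_bounded a b A :
  (forall n, a n <> b n) -> weakly_cauchy a b -> infinite A ->
  exists K, infinite (fun n => A n /\ d (a n) (b n) <= K).
Proof.
  intros Hab Hw HA; apply NNPP; intro hK.
  pose proof (fun n e => Hab n (eq_sym e)) as Hba.
  pose proof (weakly_cauchy_swap a b Hw) as Hw'.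
  pose proof (to_infinity_of_unbounded _ _ hK) as Hinf.
  assert (Hinf' : to_infinity A (fun n => d (b n) (a n))).
  { intro M; apply eventually_in_impl with (1 := Hinf M); intros n _; now rewrite dist_sym. }
  destruct (classic (exists C, infinite (fun n => A n /\ d (b n) o <= C))) as [[C HC] | hb].
  { exact (bounded_endpoint_not_dist_to_inf a b A C Hab Hw Hinf HC). }
  destruct (classic (exists C, infinite (fun n => A n /\ d (a n) o <= C))) as [[C HC] | ha].
  { exact (bounded_endpoint_not_dist_to_inf b a A C Hba Hw' Hinf' HC). }
  apply to_infinity_of_unbounded in ha, hb.
  destruct (infinite_or A _ _ HA (fun n _ => far_endpoint (a n) (b n) o)) as [h | h].
  - exact (unbounded_endpoints_not_dist_to_inf a b A Hab Hw Hinf hb h).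
  - exact (unbounded_endpoints_not_dist_to_inf b a A Hba Hw' Hinf' ha h).
Qed.

Lemma separated_eventually_far p A eps z :
  separated_along A p eps -> eventually_in A (fun m => eps / 2 <= d (p m) z).
Proof.
  intro Hsep.
  destruct (classic (exists m1, A m1 /\ d (p m1) z < eps / 2)) as [(m1 & Am1 & hm1) | hnear].
  - apply eventually_in_impl with (1 := Hsep m1 Am1); intros m _ hm.
    pose proof (dist_triangle (p m) z (p m1)); pose proof (dist_sym z (p m1)); lra.
  - exists O; intros m _ Am; apply Rnot_lt_le; intro h; apply hnear; now exists m.
Qed.

Lemma apart_endpoints_not_separated a b A U c eps :
  (forall n, a n <> b n) -> weakly_cauchy a b -> 0 < c <= 1 -> 0 < eps ->
  (forall m, A m -> c * d (a m) (b m) <= eps / 4) -> separated_along A a eps ->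
  (forall n, U n -> A n) -> infinite U ->
  (forall j, U j -> eventually_in U (fun m => eps / 4 <= d (a j) (b m))) -> False.
Proof.
  intros Hab Hw Hc Heps Hsmall Hsep HUA HU Hfar.
  apply (weakly_cauchy_no_far_subset a b c U Hab Hw Hc HU).
  intros j Uj.
  assert (Hev : eventually_in U (fun m => eps <= d (a m) (a j) /\ eps / 2 <= d (a m) (b j))).
  { apply eventually_in_subset with A; [exact HUA |].
    apply eventually_in_and; [exact (Hsep j (HUA j Uj)) | apply separated_eventually_far, Hsep]. }
  apply eventually_in_impl with (1 := eventually_in_and _ _ _ Hev (Hfar j Uj)).
  intros m Um [[h1 h2] h3].
  pose proof (Hsmall m (HUA m Um)); pose proof (Hsmall j (HUA j Uj));
    pose proof (dist_sym (a j) (a m)).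
  unfold far_from; repeat split; lra.
Qed.

Lemma weakly_cauchy_not_separated a b A K eps :
  (forall n, a n <> b n) -> weakly_cauchy a b -> infinite A ->
  (forall n, A n -> d (a n) (b n) <= K) -> 0 < eps -> separated_along A a eps -> False.
Proof.
  intros Hab Hw HA HK Heps Hsep.
  assert (K0 : 0 <= K).
  { destruct (HA O) as (n & _ & An); specialize (HK n An);
      pose proof (dist_ge0 (a n) (b n)); lra. }
  set (c := eps / (4 * (K + eps))).
  assert (Hc_def : c * K + c * eps = eps / 4) by (unfold c; field; lra).
  assert (Hc0 : 0 < c) by (apply Rdiv_lt_0_compat; lra).
  assert (Hc : 0 < c <= 1).
  { pose proof (Rmult_le_pos c K ltac:(lra) K0); split; [lra | nra]. }
  assert (Hsmall : forall m, A m -> c * d (a m) (b m) <= eps / 4).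
  { intros m Am; pose proof (Rmult_le_compat_l c _ _ ltac:(lra) (HK m Am)).
    pose proof (Rmult_lt_0_compat c eps Hc0 Heps); lra. }
  destruct (classic (exists j0, A j0 /\ infinite (fun m => A m /\ d (a j0) (b m) < eps / 4)))
    as [(j0 & Aj0 & Hj0) | hnear].
  - set (U := fun m => (A m /\ d (a j0) (b m) < eps / 4) /\ eps / 2 <= d (a m) (a j0)).
    apply (apart_endpoints_not_separated a b A U c eps); auto.
    + now intros n [[An _] _].
    + apply infinite_eventually; [exact Hj0 |].
      apply eventually_in_subset with A; [now intros n [] |].
      apply separated_eventually_far, Hsep.
    + intros j [_ Hj]; exists O; intros m _ [[_ Hm] _].
      pose proof (dist_triangle (a j) (b m) (a j0)); pose proof (dist_sym (b m) (a j0)); lra.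
  - apply (apart_endpoints_not_separated a b A A c eps); auto.
    intros j Aj; apply eventually_in_of_not_infinite; intro hinf; apply hnear.
    exists j; split; [exact Aj |].
    apply infinite_mono with (2 := hinf); intros m [Am hm]; split; [exact Am | lra].
Qed.

Definition clustering (p : nat -> T) (A : nat -> Prop) : Prop :=
  forall A1, (forall n, A1 n -> A n) -> infinite A1 -> forall eps, 0 < eps ->
    exists j, infinite (fun m => A1 m /\ d (p m) (p j) < eps).

Lemma clustering_nested_balls p A :
  infinite A -> clustering p A ->
  exists As : nat -> nat -> Prop,
    (forall k, (forall n, As k n -> A n) /\ infinite (As k)) /\
    (forall k k', (k <= k')%nat -> forall n, As k' n -> As k n) /\
    (forall k, exists z, forall n, As k n -> d (p n) z < / INR (S k)).
Proof.
  intros HA Hclust.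
  destruct (choice (fun (Ak : (nat -> Prop) * nat) j =>
              (forall n, fst Ak n -> A n) -> infinite (fst Ak) ->
              infinite (fun m => fst Ak m /\ d (p m) (p j) < / INR (S (snd Ak)))))
    as [center Hcenter].
  { intros [A1 k]; destruct (classic ((forall n, A1 n -> A n) /\ infinite A1))
      as [[hsub hinf] | h].
    - destruct (Hclust A1 hsub hinf (/ INR (S k))) as [j Hj];
        [apply Rinv_0_lt_compat, lt_0_INR; lia | now exists j].
    - exists O; intros hsub hinf; now destruct h. }
  pose (nest := fix nest k := match k with
    | O => A
    | S k => fun m => nest k m /\ d (p m) (p (center (nest k, k))) < / INR (S k)
    end).
  assert (Hnest : forall k, (forall n, nest k n -> A n) /\ infinite (nest k)).
  { induction k as [|k [hsub hinf]]; [split; [auto | exact HA] |]; split.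
    - intros n [hn _]; auto.
    - exact (Hcenter (nest k, k) hsub hinf). }
  exists (fun k => nest (S k)); split; [intro k; apply Hnest | split].
  - intros k k' hk; induction hk as [|k' hk IH]; [auto | intros n [hn _]; auto].
  - intro k; exists (p (center (nest k, k))); now intros n [_ h].
Qed.

Hypothesis Hc : complete_metric d.

Lemma clustering_cv_subset p A :
  infinite A -> clustering p A ->
  exists A1 x, (forall n, A1 n -> A n) /\ infinite A1 /\ cv_along A1 p x.
Proof.
  intros HA Hclust.
  destruct (clustering_nested_balls p A HA Hclust) as (As & HAs & Hdecr & Hball).
  destruct (choice _ Hball) as [z Hz].
  destruct (diagonal_chain As) as (phi & Hphi & Hin); [intro k; apply HAs |].
  destruct (Hc (fun k => p (phi k))) as [x Hx].
  { intros eps heps; destruct (archimed_cor1 (eps / 2)) as (K & hK & hK0); [lra |].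
    exists K; intros m n hm hn.
    pose proof (Hz K _ (Hdecr K m hm _ (Hin m))); pose proof (Hz K _ (Hdecr K n hn _ (Hin n))).
    pose proof (dist_triangle (p (phi m)) (z K) (p (phi n)));
      pose proof (dist_sym (z K) (p (phi n))).
    assert (/ INR (S K) <= / INR K)
      by (apply Rinv_le_contravar; [apply lt_0_INR; lia | apply le_INR; lia]).
    lra. }
  exists (range phi), x; split; [| split].
  - intros n [k ->]; apply (HAs k), Hin.
  - now apply infinite_range.
  - now apply cv_along_range.
Qed.

Lemma separated_or_cv p A :
  infinite A ->
  (exists A1 eps, (forall n, A1 n -> A n) /\ infinite A1 /\ 0 < eps /\
     separated_along A1 p eps) \/
  (exists A1 x, (forall n, A1 n -> A n) /\ infinite A1 /\ cv_along A1 p x).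
Proof.
  intro HA.
  destruct (classic (exists A1 eps, (forall n, A1 n -> A n) /\ infinite A1 /\ 0 < eps /\
                       separated_along A1 p eps)) as [h | h]; [now left | right].
  apply clustering_cv_subset; [exact HA |].
  intros A1 hsub hinf eps heps; apply NNPP; intro hfar; apply h.
  exists A1, eps; repeat split; auto.
  intros j _; apply eventually_in_of_not_infinite; intro hj; apply hfar; exists j.
  apply infinite_mono with (2 := hj); intros m [Am hm]; split; [exact Am | lra].
Qed.

Lemma weakly_cauchy_cv_subset a b A :
  (forall n, a n <> b n) -> weakly_cauchy a b -> infinite A ->
  exists x y A', x <> y /\ (forall n, A' n -> A n) /\ infinite A' /\
    cv_along A' a x /\ cv_along A' b y.
Proof.
  intros Hab Hw HA.
  destruct (weakly_cauchy_dist_bounded a b A Hab Hw HA) as [K HK].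
  destruct (separated_or_cv a _ HK)
    as [(A1 & eps & Hsub & HA1 & Heps & Hsep) | (A1 & x & Hsub1 & HA1 & Hx)].
  { exfalso; apply (weakly_cauchy_not_separated a b A1 K eps Hab Hw HA1); auto.
    intros n hn; apply (Hsub n hn). }
  destruct (separated_or_cv b A1 HA1)
    as [(A2 & eps & Hsub & HA2 & Heps & Hsep) | (A2 & y & Hsub2 & HA2 & Hy)].
  { exfalso; apply (weakly_cauchy_not_separated b a A2 K eps (fun n e => Hab n (eq_sym e))
                      (weakly_cauchy_swap a b Hw) HA2); auto.
    intros n hn; rewrite dist_sym; apply (Hsub1 n (Hsub n hn)). }
  assert (Hx2 : cv_along A2 a x) by (apply cv_along_subset with A1; auto).
  destruct (classic (x = y)) as [<- | hxy].
  { exfalso; exact (weakly_cauchy_not_same_limit a b A2 x Hab Hw HA2 Hx2 Hy). }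
  exists x, y, A2; repeat split; auto.
  intros n hn; apply (Hsub1 n (Hsub2 n hn)).
Qed.

Lemma molecule_limit_along a b A x y f L :
  (forall n, a n <> b n) -> infinite A -> x <> y -> cv_along A a x -> cv_along A b y ->
  lipschitz_with d 1 f -> Un_cv (fun n => molecule d (a n) (b n) f) L ->
  L = molecule d x y f.
Proof.
  intros Hab HA hxy Ha Hb Hf HL; apply cond_eq; intros eps heps.
  destruct (HL (eps / 2)) as [N HN]; [lra |].
  destruct (infinite_eventually _ _ HA
              (molecules_close_eventually a b A x y Hab hxy Ha Hb (eps / 2) ltac:(lra)) N)
    as (n & hn & _ & Hn).
  specialize (Hn f Hf); specialize (HN n hn); unfold R_dist in HN.
  rewrite Rabs_minus_sym in HN.
  replace (L - molecule d x y f)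
    with ((L - molecule d (a n) (b n) f) + (molecule d (a n) (b n) f - molecule d x y f))
    by ring.
  eapply Rle_lt_trans; [apply Rabs_triang | lra].
Qed.

Lemma molecule_ball_inj x y x' y' :
  x <> y -> x' <> y' ->
  (forall f, Lip0_ball d o f -> molecule d x y f = molecule d x' y' f) -> x = x' /\ y = y'.
Proof.
  intros hxy hxy' Heq.
  set (e := fun i : nat => match i with O => x | _ => y' end).
  specialize (Heq _ (dist_seq_ball e)); rewrite !molecule_shift in Heq.
  assert (Hx : dist_seq e x = 0) by exact (dist_seq_at e O).
  assert (Hy' : dist_seq e y' = 0) by exact (dist_seq_at e 1).
  assert (Hle : molecule d x y (dist_seq e) <= 0).
  { apply molecule_le; [exact hxy |]; rewrite Hx; pose proof (dist_seq_ge0 e y); lra. }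
  assert (Hge : 0 <= molecule d x' y' (dist_seq e)).
  { apply molecule_ge; [exact hxy' |]; rewrite Hy'; pose proof (dist_seq_ge0 e x'); lra. }
  assert (Hy : dist_seq e y = 0).
  { pose proof (molecule_mul (dist_seq e) x y hxy) as E.
    replace (molecule d x y (dist_seq e)) with 0 in E by lra; lra. }
  assert (Hx' : dist_seq e x' = 0).
  { pose proof (molecule_mul (dist_seq e) x' y' hxy') as E.
    replace (molecule d x' y' (dist_seq e)) with 0 in E by lra; lra. }
  assert (Hnear : forall t, dist_seq e t = 0 -> t = x \/ t = y').
  { intros t ht.
    assert (Rmin (d t x) (d t y') <= 0)
      by (rewrite <- ht; apply dist_seq_glb; intros [|i]; [apply Rmin_l | apply Rmin_r]).
    pose proof (dist_ge0 t x); pose proof (dist_ge0 t y').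
    unfold Rmin in *; destruct (Rle_dec (d t x) (d t y'));
      [left | right]; apply dist_eq0; lra. }
  destruct (Hnear x' Hx') as [Hx'x | Hx'y']; [| contradiction].
  destruct (Hnear y Hy) as [Hyx | Hyy']; [now destruct hxy |].
  now split.
Qed.

Lemma molecule_ball_limit a b (mu : functional T) :
  (forall n, a n <> b n) ->
  (forall f, Lip0_ball d o f -> Un_cv (fun n => molecule d (a n) (b n) f) (mu f)) ->
  exists x y, x <> y /\ (forall f, Lip0_ball d o f -> mu f = molecule d x y f) /\
    cv_along (fun _ => True) a x /\ cv_along (fun _ => True) b y.
Proof.
  intros Hab Hmu.
  assert (Hw : weakly_cauchy a b) by (intros f Hf; exists (mu f); auto).
  assert (Hlim : forall x y A, x <> y -> infinite A -> cv_along A a x -> cv_along A b y ->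
                   forall f, Lip0_ball d o f -> mu f = molecule d x y f).
  { intros x y A hxy HA Hx Hy f Hf.
    exact (molecule_limit_along a b A x y f (mu f) Hab HA hxy Hx Hy (proj2 Hf) (Hmu f Hf)). }
  destruct (weakly_cauchy_cv_subset a b (fun _ => True) Hab Hw ltac:(intro N; now exists N))
    as (x & y & A & hxy & _ & HA & Hx & Hy).
  assert (Hsub : forall A', infinite A' -> exists A'', (forall n, A'' n -> A' n) /\
                   infinite A'' /\ cv_along A'' a x /\ cv_along A'' b y).
  { intros A' HA'.
    destruct (weakly_cauchy_cv_subset a b A' Hab Hw HA')
      as (x' & y' & A'' & hxy' & hsub & HA'' & Hx' & Hy').
    destruct (molecule_ball_inj x' y' x y hxy' hxy) as [-> ->].
    { intros f Hf; rewrite <- (Hlim x' y' A''), <- (Hlim x y A); auto. }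
    now exists A''. }
  exists x, y; split; [exact hxy | split; [exact (Hlim x y A hxy HA Hx Hy) | split]];
    apply cv_of_cv_subsets; intros A' HA';
    destruct (Hsub A' HA') as (A'' & ? & ? & ? & ?); now exists A''.
Qed.

Lemma weak_cv_eval (s : nat -> functional T) mu f :
  weak_cv d o s mu -> Lip0_ball d o f -> Un_cv (fun n => s n f) (mu f).
Proof.
  intros Hw Hf; apply (Hw (fun nu => nu f)); split.
  - now intros.
  - exists 1; intros nu c _ Hnu; specialize (Hnu f Hf); lra.
Qed.

Lemma feq_molecule_of_ball (mu : functional T) x y :
  in_dual d o mu -> (forall f, Lip0_ball d o f -> mu f = molecule d x y f) ->
  feq d o mu (molecule d x y).
Proof.
  intros [Hlin _] Hball f Hf; pose proof Hf as [f0 [L HL]].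
  set (k := Rabs L + 1).
  assert (hk : 0 < k) by (pose proof (Rabs_pos L); unfold k; lra).
  assert (Hg : Lip0_ball d o (fun t => / k * f t + 0 * f t)).
  { split; [rewrite f0; ring |]; intros s t.
    replace (/ k * f s + 0 * f s - (/ k * f t + 0 * f t)) with (/ k * (f s - f t)) by ring.
    rewrite Rabs_mult, (Rabs_pos_eq (/ k)) by (left; apply Rinv_0_lt_compat, hk).
    apply Rmult_le_reg_l with k; [exact hk |].
    rewrite <- Rmult_assoc, Rinv_r, Rmult_1_l by lra.
    pose proof (Rmult_le_compat_r (d s t) L k (dist_ge0 s t)
                  ltac:(pose proof (Rle_abs L); unfold k; lra)).
    pose proof (HL s t); lra. }
  assert (Hk : / k * mu f = / k * molecule d x y f).
  { transitivity (mu (fun t => / k * f t + 0 * f t)); [rewrite (Hlin f f _ _ Hf Hf); ring |].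
    rewrite (Hball _ Hg); unfold molecule, Rdiv; ring. }
  apply Rmult_eq_reg_l with (/ k); [exact Hk | apply Rinv_neq_0_compat; lra].
Qed.

Lemma norm_cv_molecules a b x y :
  (forall n, a n <> b n) -> x <> y ->
  cv_along (fun _ => True) a x -> cv_along (fun _ => True) b y ->
  norm_cv d o (fun n => molecule d (a n) (b n)) (molecule d x y).
Proof.
  intros Hab hxy Ha Hb eps heps.
  destruct (molecules_close_eventually a b _ x y Hab hxy Ha Hb eps heps) as [N HN].
  exists N; intros n hn f Hf; apply Rlt_le, (HN n hn I f (proj2 Hf)).
Qed.

End Molecules.

Theorem corollary2p14 (T : Type) (d : T -> T -> R) (o : T)
  (Hd : is_metric d) (Hc : complete_metric d)
  (xs ys : nat -> T) (Hxy : forall n, xs n <> ys n)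
  (mu : functional T) (Hmu : in_free d o mu)
  (Hw : weak_cv d o (fun n => molecule d (xs n) (ys n)) mu) :
  exists x y : T, x <> y /\
    feq d o mu (molecule d x y) /\
    norm_cv d o (fun n => molecule d (xs n) (ys n)) (molecule d x y).
Proof.
  destruct (molecule_ball_limit T d o Hd Hc xs ys mu Hxy) as (x & y & hxy & Hmu_xy & Hx & Hy).
  { intros f Hf; exact (weak_cv_eval T d o _ mu f Hw Hf). }
  exists x, y; split; [exact hxy | split].
  - exact (feq_molecule_of_ball T d o Hd mu x y (proj1 Hmu) Hmu_xy).
  - exact (norm_cv_molecules T d o Hd xs ys x y Hxy hxy Hx Hy).
Qed.
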